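(* Let $(X,\delta,c)$ be an accepting automaton over $\Sigma$ and let $\mu\mathrm{PL}(\delta,c)$ be as in the context. Then $\mu\mathrm{PL}(\delta,c)$ is isomorphic to a preformation of languages: the map $\mathcal{U}\mapsto L(\mathcal{U})$ is an isomorphism from the state space $P(\Sigma^\ast/{\approx})$ (a complete atomic Boolean algebra) onto a preformation of languages, under which the transitions of $\mu\mathrm{PL}(\delta,c)$ correspond to language derivatives.
   Context: $\Sigma$ is a finite alphabet, $\Sigma^\ast$ the free monoid with empty word $\epsilon$, $u^r$ the reversal of $u$. An accepting automaton is $(X,\delta,c)$ with $\delta:X\to X^\Sigma$ (extended to words by $\delta(x)(\epsilon)=x$, $\delta(x)(wa)=\delta(\delta(x)(w))(a)$) and $c\subseteq X$. Define $\widehat{\delta}:P(X)\to P(X)^\Sigma$ by $\widehat{\delta}(U)(a)=\{x\mid\delta(x)(a)\in U\}$, extended to words, so $\widehat{\delta}(U)(w)=\{x\mid\delta(x)(w^r)\in U\}$. Let $\langle c\rangle=\{\widehat{\delta}(c)(w)\mid w\in\Sigma^\ast\}$ and $u\approx v$ iff $\widehat{\delta}(U)(u)=\widehat{\delta}(U)(v)$ for all $U\in\langle c\rangle$. $\mu\mathrm{PL}(\delta,c)$ has state space $P(\Sigma^\ast/{\approx})$, transition $\widehat{\sigma}(\mathcal{U})(u)=\{[w]\mid[wu^r]\in\mathcal{U}\}$ and final states $\{\mathcal{U}\mid[\epsilon]\in\mathcal{U}\}$; $L(\mathcal{U})=\{u\mid[\epsilon]\in\widehat{\sigma}(\mathcal{U})(u)\}$.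 A preformation of languages is a complete atomic Boolean subalgebra of the powerset $2^{\Sigma^\ast}$ which is closed under left derivatives $U\mapsto\{w\mid aw\in U\}$ and right derivatives $U\mapsto\{w\mid wa\in U\}$ for all $a\in\Sigma$. *)

From mathcomp Require Import all_boot.
Set Implicit Arguments. Unset Strict Implicit. Unset Printing Implicit Defensive.

Section Languages.
Variable A : Type.

Definition empty_lang : seq A -> Prop := fun _ => False.

Definition lderiv (a : A) (K : seq A -> Prop) : seq A -> Prop := fun w => K (a :: w).
Definition rderiv (a : A) (K : seq A -> Prop) : seq A -> Prop := fun w => K (rcons w a).

Definition complete_boolean_subalgebra (B : (seq A -> Prop) -> Prop) : Prop :=
  (forall (I : Type) (F : I -> seq A -> Prop),
      (forall i, B (F i)) -> B (fun w => exists i, F i w)) /\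
  (forall (I : Type) (F : I -> seq A -> Prop),
      (forall i, B (F i)) -> B (fun w => forall i, F i w)) /\
  (forall K, B K -> B (fun w => ~ K w)).

Definition atom_of (B : (seq A -> Prop) -> Prop) (a : seq A -> Prop) : Prop :=
  B a /\ a <> empty_lang /\
  (forall b, B b -> (forall w, b w -> a w) -> b = empty_lang \/ b = a).

Definition atomic (B : (seq A -> Prop) -> Prop) : Prop :=
  forall K, B K -> K <> empty_lang ->
    exists a, atom_of B a /\ (forall w, a w -> K w).

Definition preformation (B : (seq A -> Prop) -> Prop) : Prop :=
  complete_boolean_subalgebra B /\ atomic B /\
  (forall a K, B K -> B (lderiv a K)) /\
  (forall a K, B K -> B (rderiv a K)).

End Languages.

Section MuPL.
Variables (Sigma : finType) (X : Type) (delta : X -> Sigma -> X) (c : X -> Prop).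

Definition delta_w (x : X) (w : seq Sigma) : X := foldl delta x w.

Definition delta_hat (U : X -> Prop) (w : seq Sigma) : X -> Prop :=
  fun x => U (delta_w x (rev w)).

Definition gen_c (U : X -> Prop) : Prop := exists w, U = delta_hat c w.

Definition approx (u v : seq Sigma) : Prop :=
  forall U, gen_c U -> delta_hat U u = delta_hat U v.

Definition cls : Type := {C : seq Sigma -> Prop | exists w, C = approx w}.
Definition cls_of (w : seq Sigma) : cls := exist _ (approx w) (ex_intro _ w erefl).

Definition state : Type := cls -> Prop.

Definition sigma_hat (U : state) (u : seq Sigma) : state :=
  fun K => exists w, K = cls_of w /\ U (cls_of (w ++ rev u)).

Definition final (U : state) : Prop := U (cls_of [::]).

Definition Lang (U : state) : seq Sigma -> Prop :=
  fun u => sigma_hat U u (cls_of [::]).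

Definition state_union (I : Type) (F : I -> state) : state :=
  fun K => exists i, F i K.
Definition state_compl (U : state) : state := fun K => ~ U K.

End MuPL.

(* The relation u ~ v is a two-sided congruence on words, so the languages
   saturated by its reversal form a complete atomic Boolean algebra of
   languages (atoms: the congruence classes) closed under both derivatives.
   The language of a state U is the set of u whose reversal has its class in
   U; as every class is a [w], this is a bijection from P(Sigma^*/~) onto the
   saturated languages which commutes with unions, complements and, since
   sigma_hat appends reversed words, turns transitions into derivatives. *)
From Stdlib Require Import FunctionalExtensionality PropExtensionality ProofIrrelevance Classical.
From mathcomp Require Import all_boot.

Lemma lang_ext {A : Type} (K K' : seq A -> Prop) :
  (forall w, K w <-> K' w) -> K = K'.
Proof.
move=> eqKK'; apply: functional_extensionality => w.
exact: propositional_extensionality.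
Qed.

Lemma lang_empty_or_inhabited {A : Type} (K : seq A -> Prop) :
  K = @empty_lang A \/ exists w, K w.
Proof.
case: (classic (exists w, K w)) => [|noK]; [by right | left].
by apply: lang_ext => w; split=> // Kw; apply: noK; exists w.
Qed.

Section SaturatedLanguages.
Context {A : Type} (R : seq A -> seq A -> Prop).
Hypothesis R_refl : forall u, R u u.
Hypothesis R_sym : forall {u v}, R u v -> R v u.
Hypothesis R_trans : forall {u v w}, R u v -> R v w -> R u w.
Hypothesis R_cons : forall a {u v}, R u v -> R (a :: u) (a :: v).
Hypothesis R_rcons : forall a {u v}, R u v -> R (rcons u a) (rcons v a).

Definition saturated (K : seq A -> Prop) : Prop :=
  forall u v, R u v -> K u -> K v.

Lemma saturated_complete_boolean_subalgebra :
  complete_boolean_subalgebra saturated.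
Proof.
split; [|split].
- by move=> I F satF u v Ruv [i Fiu]; exists i; apply: satF Ruv Fiu.
- by move=> I F satF u v Ruv Fu i; apply: satF Ruv (Fu i).
- by move=> K satK u v Ruv nKu Kv; apply/nKu/(satK v u (R_sym Ruv) Kv).
Qed.

Lemma atom_of_saturated_class u : atom_of saturated (R u).
Proof.
split; [|split].
- by move=> v w Rvw Ruv; apply: R_trans Ruv Rvw.
- by move=> Ru_empty; have := R_refl u; rewrite Ru_empty.
- move=> b satb sub_b_Ru; have [|[v bv]] := lang_empty_or_inhabited b; first by left.
  right; apply: lang_ext => w; split; first exact: sub_b_Ru.
  by move=> Ruw; apply: (satb v) (bv); apply: R_trans (R_sym (sub_b_Ru v bv)) Ruw.
Qed.

Lemma saturated_atomic : atomic saturated.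
Proof.
move=> K satK K_nonempty; have [//|[u Ku]] := lang_empty_or_inhabited K.
by exists (R u); split; [apply: atom_of_saturated_class | move=> v Ruv; apply: satK Ku].
Qed.

Lemma saturated_preformation : preformation saturated.
Proof.
split; [exact: saturated_complete_boolean_subalgebra | split; [exact: saturated_atomic|]].
split=> a K satK u v Ruv; apply: satK; [exact: R_cons | exact: R_rcons].
Qed.

End SaturatedLanguages.

Section MuPL.
Variables (Sigma : finType) (X : Type) (delta : X -> Sigma -> X) (c : X -> Prop).

Local Notation approx := (approx delta c).
Local Notation cls_of := (cls_of delta c).
Local Notation Lang := (@Lang Sigma X delta c).
Local Notation state := (state delta c).

Lemma delta_hat_cat (U : X -> Prop) w p :
  delta_hat delta (delta_hat delta U w) p = delta_hat delta U (w ++ p).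
Proof.
by apply: functional_extensionality => x; rewrite /delta_hat /delta_w rev_cat foldl_cat.
Qed.

Lemma approxE u v : approx u v <->
  forall w, delta_hat delta c (w ++ u) = delta_hat delta c (w ++ v).
Proof.
split=> [approx_uv w | eq_ctx _ [w ->]]; last by rewrite !delta_hat_cat eq_ctx.
by rewrite -!delta_hat_cat; apply: approx_uv; exists w.
Qed.

Lemma approx_refl u : approx u u.
Proof. by []. Qed.

Lemma approx_sym {u v} : approx u v -> approx v u.
Proof. by move=> approx_uv U genU; rewrite (approx_uv U genU). Qed.

Lemma approx_trans {u v w} : approx u v -> approx v w -> approx u w.
Proof. by move=> approx_uv approx_vw U genU; rewrite approx_uv ?approx_vw. Qed.

Lemma approx_catl p {u v} : approx u v -> approx (p ++ u) (p ++ v).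
Proof. by move/approxE=> eq_ctx; apply/approxE=> w; rewrite !catA eq_ctx. Qed.

Lemma approx_catr p {u v} : approx u v -> approx (u ++ p) (v ++ p).
Proof.
by move/approxE=> eq_ctx; apply/approxE=> w; rewrite !catA -!(delta_hat_cat c _ p) eq_ctx.
Qed.

Lemma eq_cls_of u v : cls_of u = cls_of v <-> approx u v.
Proof.
split=> [eq_uv | approx_uv].
  by have /= -> := congr1 (fun C => sval C v) eq_uv; apply: approx_refl.
apply: subset_eq_compat; apply: lang_ext => w; split; last exact: approx_trans.
exact/approx_trans/approx_sym.
Qed.

Lemma cls_of_surj (C : cls delta c) : exists w, C = cls_of w.
Proof.
by case: C => C [w defC]; exists w; apply: subset_eq_compat.
Qed.

Lemma sigma_hat_cls_of (U : state) u w :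
  sigma_hat U u (cls_of w) <-> U (cls_of (w ++ rev u)).
Proof.
split=> [[w' [/eq_cls_of approx_ww' Uw']] | Uw]; last by exists w.
by have /eq_cls_of -> := approx_catr (rev u) approx_ww'.
Qed.

Lemma LangE (U : state) : Lang U = fun u => U (cls_of (rev u)).
Proof. by apply: lang_ext => u; apply: sigma_hat_cls_of. Qed.

Lemma Lang_sigma_hat (U : state) u : Lang (sigma_hat U u) = fun v => Lang U (u ++ v).
Proof.
by apply: lang_ext => v; rewrite LangE sigma_hat_cls_of LangE rev_cat.
Qed.

Lemma Lang_inj (U V : state) : Lang U = Lang V -> U = V.
Proof.
move=> eqLUV; apply: functional_extensionality => C; have [w ->] := cls_of_surj C.
by have := congr1 (fun K => K (rev w)) eqLUV; rewrite !LangE revK.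
Qed.

Lemma Lang_union (I : Type) (F : I -> state) :
  Lang (state_union F) = fun u => exists i, Lang (F i) u.
Proof.
apply: lang_ext => u; rewrite LangE.
by split=> -[i Fiu]; exists i; rewrite LangE in Fiu *.
Qed.

Lemma Lang_compl (U : state) : Lang (state_compl U) = fun u => ~ Lang U u.
Proof. by rewrite !LangE. Qed.

Lemma final_Lang (U : state) : final U <-> Lang U [::].
Proof. by rewrite LangE. Qed.

Definition approx_rev u v := approx (rev u) (rev v).

Lemma image_Lang : (fun K => exists U, K = Lang U) = saturated approx_rev.
Proof.
apply: functional_extensionality => K; apply: propositional_extensionality.
split=> [[U ->] u v /eq_cls_of | satK].
  by rewrite LangE => ->.
exists (fun C => exists w, C = cls_of w /\ K (rev w)); rewrite LangE.
apply: lang_ext => u; split=> [Ku | [w [/eq_cls_of approx_uw Kw]]].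
  by exists (rev u); rewrite revK.
by apply: satK Kw; rewrite /approx_rev revK; apply: approx_sym.
Qed.

Lemma preformation_image_Lang : preformation (fun K => exists U, K = Lang U).
Proof.
rewrite image_Lang; apply: saturated_preformation => [u|u v|u v w|a u v|a u v].
- exact: approx_refl.
- exact: approx_sym.
- exact: approx_trans.
- by rewrite /approx_rev !rev_cons -!cats1; apply: approx_catr.
- by rewrite /approx_rev !rev_rcons; apply: (approx_catl [:: a]).
Qed.

End MuPL.

Theorem mainTheorem6 (Sigma : finType) (X : Type) (delta : X -> Sigma -> X)
    (c : X -> Prop) :
  let L := @Lang Sigma X delta c in
  (* the image of L is a preformation of languages *)
  preformation (fun K : seq Sigma -> Prop => exists U, K = L U) /\
  (* L is injective, hence a bijection onto its image *)
  (forall U V, L U = L V -> U = V) /\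
  (* L is a complete Boolean algebra homomorphism *)
  (forall (I : Type) (F : I -> @state Sigma X delta c),
      L (state_union F) = (fun u => exists i, L (F i) u)) /\
  (forall U, L (state_compl U) = (fun u => ~ L U u)) /\
  (* transitions correspond to (left) language derivatives *)
  (forall U (a : Sigma), L (sigma_hat U [:: a]) = lderiv a (L U)) /\
  (forall U (u : seq Sigma), L (sigma_hat U u) = (fun v => L U (u ++ v))) /\
  (* final states correspond to languages containing the empty word *)
  (forall U, final U <-> L U [::]).
Proof.
split; [exact: preformation_image_Lang | split; [exact: Lang_inj|]].
split; [exact: Lang_union | split; [exact: Lang_compl|]].
split; [by move=> U a; rewrite Lang_sigma_hat | split; [exact: Lang_sigma_hat|]].
exact: final_Lang.
Qed.
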